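(* Assume $b>1$. For every $1\le i\le b$ and every positive integer $n$, $$p\,d_i(n)>\sum_{k=0}^\infty y_i\bigl(n-k(p-1)\bigr).$$
   Context: Let $q=p^b$ with $p$ prime. Let $y\in\mathbb{Z}_p$ be written $y=\sum_{i=1}^b p^{i-1}y_i$ with $y_i=\sum_{j\ge0}y_{i,j}q^j$, $0\le y_{i,j}<p$, and assume no $y_i$ is a non-negative integer. For $n\ge1$, $d_i(n)=p^{i-1}q^w$ where $w\ge0$ is the unique integer with $\sum_{j=0}^{w-1}y_{i,j}<n\le\sum_{j=0}^{w}y_{i,j}$. For $m\in\mathbb{Z}$, $y_i(m)=\sum_{n=1}^m d_i(n)$, which is $0$ for $m\le0$ (so the sum is finite). *)

From mathcomp Require Import all_boot all_order all_algebra.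
From Stdlib Require Import ClassicalEpsilon.
Set Implicit Arguments. Unset Strict Implicit. Unset Printing Implicit Defensive.

(* Digits: yd i j = y_{i,j}  (1 <= i <= b, j >= 0), each in [0, p). *)

Definition psum (a : nat -> nat) (w : nat) : nat := \sum_(j < w) a j.

(* the (unique, under the standing hypotheses) w >= 0 with
   S(w) < n <= S(w+1) *)
Definition wexp (a : nat -> nat) (n : nat) : nat :=
  epsilon (inhabits 0%N) (fun w => psum a w < n <= psum a w.+1).

Definition dfun (p b : nat) (yd : nat -> nat -> nat) (i n : nat) : nat :=
  p ^ (i.-1) * (p ^ b) ^ (wexp (yd i) n).

Definition yfun (p b : nat) (yd : nat -> nat -> nat) (i : nat) (m : int) : nat :=
  match m with
  | Posz k => \sum_(1 <= n < k.+1) dfun p b yd i n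
  | Negz _ => 0
  end.

(* Write S(w) for the partial digit sums, X(w) = p^(i-1) q^w and Y(w) = y_i(S(w)).
   On the block S(w) < n <= S(w+1) the function d_i is constant equal to X(w),
   so y_i grows linearly there and Y(w+1) = Y(w) + y_{i,w} X(w).  Since every
   digit is at most p - 1, each shift n |-> n - (p-1) leaves the current block,
   hence the k-th term of the series is at most Y(w+1-k) and the whole series
   is at most y_i(n) + Y(0) + ... + Y(w).  As q >= p^2, the X(w) grow so fast
   that Y(w) + Y(0) + ... + Y(w) < X(w), while y_i(n) <= Y(w) + (p-1) X(w);
   together this is < p X(w) = p d_i(n). *)
From mathcomp Require Import all_boot all_order all_algebra zify.
From Stdlib Require Import ClassicalEpsilon.
Set Implicit Arguments. Unset Strict Implicit. Unset Printing Implicit Defensive.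
Import GRing.Theory.

Section PartialSums.
Variable a : nat -> nat.
Hypothesis a_nonzero_infinitely : forall N, exists j, (N <= j)%N /\ a j <> 0%N.

Lemma psum0 : psum a 0 = 0%N.
Proof. by rewrite /psum big_ord0. Qed.

Lemma psumS w : psum a w.+1 = (psum a w + a w)%N.
Proof. by rewrite /psum big_ord_recr. Qed.

Lemma psum_homo : {homo psum a : v w / (v <= w)%N}.
Proof.
by apply: homo_leq => [//|??? /leq_trans|w]; [exact | rewrite psumS leq_addr].
Qed.

Lemma psum_unbounded N : exists w, (N <= psum a w)%N.
Proof.
elim: N => [|N [w leNw]]; first by exists 0%N.
have [j [lewj aj_neq0]] := a_nonzero_infinitely w.
exists j.+1; rewrite psumS.
have := psum_homo lewj; lia.
Qed.

Lemma wexp_spec n : (0 < n)%N ->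
  (psum a (wexp a n) < n <= psum a (wexp a n).+1)%N.
Proof.
move=> n_gt0.
apply: (epsilon_spec (inhabits 0%N) (fun w => psum a w < n <= psum a w.+1)%N).
have [m le_n_Sm min_m] := ex_minnP (psum_unbounded n).
case: m le_n_Sm min_m => [|m] le_n_Sm min_m; first by rewrite psum0 in le_n_Sm; lia.
exists m; rewrite le_n_Sm andbT ltnNge; apply/negP => /min_m; lia.
Qed.

Lemma wexp_eq n w : (psum a w < n <= psum a w.+1)%N -> wexp a n = w.
Proof.
move=> /andP [lt_Sw_n le_n_SSw].
have /andP [] := wexp_spec (leq_ltn_trans (leq0n _) lt_Sw_n).
by case: (ltngtP (wexp a n) w) => // /psum_homo; lia.
Qed.

End PartialSums.

Lemma yfun0 p b yd i : yfun p b yd i 0%N = 0%N.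
Proof. by rewrite /yfun big_geq. Qed.

Lemma yfunS p b yd i (m : nat) :
  yfun p b yd i m.+1 = (yfun p b yd i m + dfun p b yd i m.+1)%N.
Proof. by rewrite /yfun big_nat_recr. Qed.

Lemma yfun_homo p b yd i :
  {homo (fun m : nat => yfun p b yd i m) : m m' / (m <= m')%N}.
Proof.
by apply: homo_leq => [//|??? /leq_trans|m]; [exact | rewrite yfunS leq_addr].
Qed.

Lemma yfun_subz p b yd i (n m : nat) :
  yfun p b yd i (n%:Z - m%:Z)%R = yfun p b yd i (n - m)%N.
Proof.
case: (leqP m n) => [le_mn|lt_nm]; first by rewrite subzn.
have -> : (n%:Z - m%:Z)%R = Negz (m - n).-1.
  by rewrite NegzE prednK ?subn_gt0 // -opprB subzn // ltnW.
have -> : (n - m = 0)%N by lia.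
by rewrite yfun0.
Qed.

Section Blocks.
Variables (p b : nat) (yd : nat -> nat -> nat) (i : nat).
Hypothesis p_gt1 : (1 < p)%N.
Hypothesis pp_le_q : (p * p <= p ^ b)%N.
Hypothesis digit_lt_p : forall j, (yd i j < p)%N.
Hypothesis digit_nonzero_infinitely : forall N, exists j, (N <= j)%N /\ yd i j <> 0%N.

Local Notation S := (psum (yd i)).
Local Notation X w := (p ^ i.-1 * (p ^ b) ^ w)%N.
Local Notation y m := (yfun p b yd i (Posz m)).
Local Notation Y w := (y (S w)).

Lemma dfun_block w n : (S w < n <= S w.+1)%N -> dfun p b yd i n = X w.
Proof. by move=> hn; rewrite /dfun (wexp_eq digit_nonzero_infinitely hn). Qed.

Lemma yfun_block w k : (k <= yd i w)%N -> y (S w + k) = (Y w + k * X w)%N.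
Proof.
elim: k => [|k IHk] lt_k_yw; first by rewrite addn0 mul0n addn0.
rewrite addnS yfunS IHk 1?ltnW // (@dfun_block w) ?psumS; lia.
Qed.

Lemma yfun_psumS w : Y w.+1 = (Y w + yd i w * X w)%N.
Proof. by rewrite {1}psumS yfun_block. Qed.

Lemma yfun_psum_add_sum_lt w : (Y w + \sum_(0 <= v < w.+1) Y v < X w)%N.
Proof.
elim: w => [|w IHw].
  by rewrite big_nat1 psum0 yfun0 expn0 muln1 expn_gt0 ltnW.
have X_S : X w.+1 = (p ^ b * X w)%N by rewrite expnS mulnCA.
rewrite big_nat_recr // yfun_psumS X_S; move: IHw; rewrite big_nat_recr //.
set A := Y w; set B := \sum_(0 <= v < w) Y v; set Z := X w; rewrite /= => IHw.
(* Since A <= B + A, twice the new left side is at most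
   3 (A + (B + A)) + 4 y_{i,w} Z < (4 y_{i,w} + 3) Z. *)
have digit_bound : (4 * yd i w + 3 <= 2 * p ^ b)%N by have := digit_lt_p w; nia.
have := leq_mul digit_bound (leqnn Z); lia.
Qed.

Lemma sum_yfun_shift_le L w n : (n <= S w)%N ->
  (\sum_(k < L) y (n - k * (p - 1)) <= y n + \sum_(0 <= v < w) Y v)%N.
Proof.
elim: L w n => [|L IHL] w n le_n_w; first by rewrite big_ord0.
rewrite big_ord_recl mul0n subn0 leq_add2l.
rewrite (eq_bigr (fun k : 'I_L => y (n - (p - 1) - k * (p - 1)))); last first.
  by move=> k _; rewrite lift0 mulSn subnDA.
case: w le_n_w => [|w] le_n_w.
  rewrite psum0 leqn0 in le_n_w; rewrite (eqP le_n_w) big_geq //.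
  by rewrite (leq_trans (IHL 0%N _ (leq0n _))) // big_geq // yfun0.
have shift_w : (n - (p - 1) <= S w)%N.
  by rewrite psumS in le_n_w; have := digit_lt_p w; lia.
rewrite big_nat_recr //= (leq_trans (IHL w _ shift_w)) // addnC leq_add2l.
exact: yfun_homo.
Qed.

Lemma sum_yfun_shift_lt L n : (0 < n)%N ->
  (\sum_(k < L) y (n - k * (p - 1)) < p * dfun p b yd i n)%N.
Proof.
move=> n_gt0; have block_n := wexp_spec digit_nonzero_infinitely n_gt0.
set w := wexp (yd i) n in block_n.
rewrite (dfun_block block_n).
have offset_le : (n - S w <= yd i w)%N by move: block_n; rewrite psumS; lia.
have offset_lt : (n - S w < p)%N := leq_ltn_trans offset_le (digit_lt_p w).
have y_n : y n = (Y w + (n - S w) * X w)%N.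
  by rewrite -yfun_block // subnKC // ltnW; case/andP: block_n.
have := sum_yfun_shift_le L (proj2 (andP block_n)).
have := yfun_psum_add_sum_lt w.
have := leq_mul offset_lt (leqnn (X w)).
rewrite y_n; lia.
Qed.

End Blocks.

Theorem lemma6p6 (p b : nat) (yd : nat -> nat -> nat)
  (hp : prime p) (hb : (1 < b)%N)
  (hdig : forall i j, (1 <= i <= b)%N -> (yd i j < p)%N)
  (hnotint : forall i, (1 <= i <= b)%N ->
      forall N : nat, exists j : nat, (N <= j)%N /\ yd i j <> 0%N)
  (i n : nat) (hi : (1 <= i <= b)%N) (hn : (1 <= n)%N) :
  (\sum_(k < n.+1)
      yfun p b yd i ((n%:Z - (k * (p - 1))%:Z)%R)
     < p * dfun p b yd i n)%N.
Proof.
have p_gt1 := prime_gt1 hp.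
have pp_le_q : (p * p <= p ^ b)%N by rewrite mulnn leq_pexp2l // ltnW.
under eq_bigr => k _ do rewrite yfun_subz.
exact: (sum_yfun_shift_lt p_gt1 pp_le_q (hdig i ^~ hi) (hnotint i hi) n.+1 hn).
Qed.
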